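(* For any two tensors $\mathcal{L}_0,\mathcal{E}_0\in\mathbb{R}^{N_1\times N_2\times N_3}$, if $\xi(\mathcal{L}_0)\,\mu(\mathcal{E}_0)<1$ then $T(\mathcal{L}_0)\cap\Omega(\mathcal{E}_0)=\{\mathbf{0}\}$.
   Context: For $\mathcal{A}\in\mathbb{R}^{N_1\times N_2\times N_3}$ write $A^{(k)}=\mathcal{A}(:,:,k)$ for its frontal slices. $\mathrm{bcirc}(\mathcal{A})\in\mathbb{R}^{N_1N_3\times N_2N_3}$ is the block circulant matrix whose $(i,j)$ block is $A^{(((i-j)\bmod N_3)+1)}$; $\mathrm{unfold}(\mathcal{A})$ stacks the frontal slices vertically and $\mathrm{fold}$ is its inverse. The t-product is $\mathcal{A}*\mathcal{B}=\mathrm{fold}(\mathrm{bcirc}(\mathcal{A})\,\mathrm{unfold}(\mathcal{B}))$. The transpose $\mathcal{A}^\top$ transposes each frontal slice and reverses the order of slices $2,\dots,N_3$. The identity tensor has first frontal slice the identity matrix and other slices zero; f-diagonal means every frontal slice is diagonal. Every $\mathcal{A}$ of tubal rank $R$ has a skinny t-SVD $\mathcal{A}=\mathcal{U}*\mathcal{S}*\mathcal{V}^\top$, $\mathcal{U}\in\mathbb{R}^{N_1\times R\times N_3}$, $\mathcal{V}\in\mathbb{R}^{N_2\times R\times N_3}$, $\mathcal{U}^\top*\mathcal{U}=\mathcal{V}^\top*\mathcal{V}=\mathcal{I}$, $\mathcal{S}\in\mathbb{R}^{R\times R\times N_3}$ f-diagonal. The tensor spectral norm is $\|\mathcal{A}\|=\|\mathrm{bcirc}(\mathcal{A})\|$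 (largest singular value); $\|\mathcal{A}\|_\infty=\max|\mathcal{A}(n_1,n_2,n_3)|$. $T(\mathcal{A})=\{\mathcal{U}*\mathcal{Y}^\top+\mathcal{W}*\mathcal{V}^\top:\mathcal{Y}\in\mathbb{R}^{N_2\times R\times N_3},\mathcal{W}\in\mathbb{R}^{N_1\times R\times N_3}\}$; $\Omega(\mathcal{A})=\{\mathcal{N}:\mathrm{support}(\mathcal{N})\subseteq\mathrm{support}(\mathcal{A})\}$. Define $\xi(\mathcal{A})=\max_{\mathcal{N}\in T(\mathcal{A}),\|\mathcal{N}\|\le1}\|\mathcal{N}\|_\infty$ and $\mu(\mathcal{A})=\max_{\mathcal{N}\in\Omega(\mathcal{A}),\|\mathcal{N}\|_\infty\le1}\|\mathcal{N}\|$. *)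

From HB Require Import structures.
From mathcomp Require Import all_boot all_order all_algebra.
From mathcomp Require Import classical_sets boolp reals.
Set Implicit Arguments. Unset Strict Implicit. Unset Printing Implicit Defensive.
Import Order.TTheory GRing.Theory Num.Theory.
Local Open Scope ring_scope.
Local Open Scope classical_set_scope.

(* A third-order tensor in R^{n1 x n2 x n3}, stored by frontal slices:
   A k = A(:,:,k) (0-indexed k). *)
Definition tensor (R : Type) (n1 n2 n3 : nat) := {ffun 'I_n3 -> 'M[R]_(n1, n2)}.

Section Tensors.
Variable R : realType.

(* ((i - j) mod n), 0-indexed block circulant index *)
Lemma cidx_proof n (i j : 'I_n) : ((i + n - j) %% n < n)%N.
Proof. by rewrite ltn_pmod // (leq_ltn_trans (leq0n i) (ltn_ord i)). Qed.
Definition cidx n (i j : 'I_n) : 'I_n := Ordinal (cidx_proof i j).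

(* (- k) mod n : index of the slice of A used for slice k of A^T *)
Lemma tidx_proof n (k : 'I_n) : ((n - k) %% n < n)%N.
Proof. by rewrite ltn_pmod // (leq_ltn_trans (leq0n k) (ltn_ord k)). Qed.
Definition tidx n (k : 'I_n) : 'I_n := Ordinal (tidx_proof k).

Definition bcirc n1 n2 n3 (A : tensor R n1 n2 n3)
  : 'M[R]_(\sum_(i < n3) n1, \sum_(j < n3) n2) :=
  \mxblock_(i < n3, j < n3) A (cidx i j).

Definition unfold n1 n2 n3 (A : tensor R n1 n2 n3) : 'M[R]_(\sum_(i < n3) n1, n2) :=
  \mxcol_(i < n3) A i.

Definition fold n1 n2 n3 (M : 'M[R]_(\sum_(i < n3) n1, n2)) : tensor R n1 n2 n3 :=
  [ffun k => submxcol M k].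

Definition tprod n1 n2 n3 n4 (A : tensor R n1 n2 n3) (B : tensor R n2 n4 n3)
  : tensor R n1 n4 n3 := fold (bcirc A *m unfold B).

(* tensor transpose: transpose each slice and reverse slices 2..n3 *)
Definition ttr n1 n2 n3 (A : tensor R n1 n2 n3) : tensor R n2 n1 n3 :=
  [ffun k => (A (tidx k))^T].

Definition tzero n1 n2 n3 : tensor R n1 n2 n3 := [ffun => 0].

Definition tid n n3 : tensor R n n n3 :=
  [ffun k => if nat_of_ord k == 0%N then 1%:M else 0].

Definition fdiag n n3 (S : tensor R n n n3) : Prop :=
  forall k (i j : 'I_n), i != j -> S k i j = 0.

(* skinny t-SVD of A with tubal rank r: A = U * S * V^T, U^T*U = V^T*V = I,
   S f-diagonal with all r diagonal tubes nonzero (so r is the tubal rank) *)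
Definition skinny_tSVD n1 n2 n3 r (A : tensor R n1 n2 n3)
  (U : tensor R n1 r n3) (S : tensor R r r n3) (V : tensor R n2 r n3) : Prop :=
  [/\ A = tprod (tprod U S) (ttr V),
      tprod (ttr U) U = tid r n3,
      tprod (ttr V) V = tid r n3,
      fdiag S &
      forall i : 'I_r, exists k, S k i i != 0].

Definition vnorm n (x : 'cV[R]_n) : R := Num.sqrt (\sum_i (x i 0) ^+ 2).
Definition specnorm m n (M : 'M[R]_(m, n)) : R :=
  sup [set vnorm (M *m x) | x in [set x : 'cV[R]_n | vnorm x <= 1]].

Definition tnorm n1 n2 n3 (A : tensor R n1 n2 n3) : R := specnorm (bcirc A).

Definition tnorm_inf n1 n2 n3 (A : tensor R n1 n2 n3) : R :=
  \big[Num.max/0]_(k < n3) \big[Num.max/0]_(i < n1) \big[Num.max/0]_(j < n2)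
     `|A k i j|.

(* T(A) built from the t-SVD factors U, V of A *)
Definition Tspace n1 n2 n3 r (U : tensor R n1 r n3) (V : tensor R n2 r n3)
  : set (tensor R n1 n2 n3) :=
  [set N : tensor R n1 n2 n3 | exists (Y : tensor R n2 r n3) (W : tensor R n1 r n3),
      N = tprod U (ttr Y) + tprod W (ttr V)].

Definition Omega n1 n2 n3 (A : tensor R n1 n2 n3) : set (tensor R n1 n2 n3) :=
  [set N : tensor R n1 n2 n3 | forall k i j, A k i j = 0 -> N k i j = 0].

Definition xi n1 n2 n3 r (U : tensor R n1 r n3) (V : tensor R n2 r n3) : R :=
  sup [set tnorm_inf N | N in Tspace U V `&` [set N : tensor R n1 n2 n3 | tnorm N <= 1]].

Definition mu n1 n2 n3 (A : tensor R n1 n2 n3) : R :=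
  sup [set tnorm N | N in Omega A `&` [set N : tensor R n1 n2 n3 | tnorm_inf N <= 1]].

End Tensors.

(* If N <> 0 lies in T(L0) and in Omega(E0), then N / ||N|| is admissible for
   xi and N / ||N||_oo is admissible for mu, as T and Omega are closed under
   scaling.  Hence xi >= ||N||_oo / ||N|| and mu >= ||N|| / ||N||_oo, so
   xi * mu >= 1.  These suprema bounds are legitimate because both sets are bounded: ||N||_oo <= ||N||
   (every entry of N is an entry of bcirc N), and ||N|| is at most a dimensional
   constant times ||N||_oo. *)
From HB Require Import structures.
From mathcomp Require Import all_boot all_order all_algebra.
From mathcomp Require Import classical_sets boolp reals.
Set Implicit Arguments. Unset Strict Implicit. Unset Printing Implicit Defensive.
Import Order.TTheory GRing.Theory Num.Theory.
Local Open Scope ring_scope.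
Local Open Scope classical_set_scope.

Section PositivelyHomogeneous.
Variables (R : realFieldType) (V : lmodType R) (f : V -> R).
Hypothesis fZ_le : forall c v, 0 < c -> f (c *: v) <= c * f v.

Lemma posZ_eq_of_le c v : 0 < c -> f (c *: v) = c * f v.
Proof.
move=> c_gt0; apply/le_anti; rewrite fZ_le //= -ler_pdivlMl //.
rewrite {1}(_ : v = c^-1 *: (c *: v)) ?fZ_le ?invr_gt0 //.
by rewrite scalerA mulVf ?gt_eqF ?scale1r.
Qed.

End PositivelyHomogeneous.

Lemma sumr_const_ord (R : pzRingType) n (a : R) : \sum_(i < n) a = n%:R * a.
Proof. by rewrite sumr_const card_ord mulr_natl. Qed.

Section SpectralNorm.
Variable R : realType.

Lemma vnorm0 n : vnorm (0 : 'cV[R]_n) = 0.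
Proof. by rewrite /vnorm big1 ?sqrtr0 // => i _; rewrite mxE expr0n. Qed.

Lemma vnormZ n (c : R) (x : 'cV[R]_n) : vnorm (c *: x) = `|c| * vnorm x.
Proof.
rewrite /vnorm -sqrtr_sqr -sqrtrM ?sqr_ge0 //; congr Num.sqrt.
by rewrite mulr_sumr; apply: eq_bigr => i _; rewrite mxE exprMn.
Qed.

Lemma normr_le_vnorm n (x : 'cV[R]_n) i : `|x i 0| <= vnorm x.
Proof.
rewrite -sqrtr_sqr /vnorm ler_wsqrtr //.
by rewrite (bigD1 i) //= lerDl sumr_ge0 // => j _; exact: sqr_ge0.
Qed.

Lemma vnorm_le n (x : 'cV[R]_n) c :
  0 <= c -> (forall i, `|x i 0| <= c) -> vnorm x <= n%:R * c.
Proof.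
move=> c_ge0 xc; rewrite /vnorm -[n%:R * c]ger0_norm ?mulr_ge0 //.
rewrite -sqrtr_sqr ler_wsqrtr //; apply: le_trans (_ : n%:R * c ^+ 2 <= _).
  rewrite -[X in _ <= X](sumr_const_ord n) ler_sum // => i _.
  by rewrite -real_normK ?num_real // ler_sqr ?nnegrE.
rewrite exprMn ler_wpM2r ?sqr_ge0 // -natrX ler_nat.
by case: n {x xc} => // n; rewrite leq_pmulr.
Qed.

Lemma normr_mulmx_le m n (M : 'M[R]_(m, n)) (t : R) x :
  (forall a b, `|M a b| <= t) -> vnorm x <= 1 ->
  forall a, `|(M *m x) a 0| <= n%:R * t.
Proof.
move=> Mt x_le1 a; rewrite mxE -sumr_const_ord.
apply: le_trans (ler_norm_sum _ _ _) (ler_sum _ _) => b _.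
by rewrite normrM -[t]mulr1 ler_pM ?Mt //; exact: le_trans (normr_le_vnorm x b) x_le1.
Qed.

Lemma vnorm_mulmx_le m n (M : 'M[R]_(m, n)) (t : R) x :
  0 <= t -> (forall a b, `|M a b| <= t) -> vnorm x <= 1 ->
  vnorm (M *m x) <= m%:R * (n%:R * t).
Proof.
move=> t_ge0 Mt x_le1; apply: vnorm_le; first exact: mulr_ge0.
exact: normr_mulmx_le.
Qed.

Lemma specnorm_set_ubound m n (M : 'M[R]_(m, n)) :
  has_ubound [set vnorm (M *m x) | x in [set x : 'cV[R]_n | vnorm x <= 1]].
Proof.
pose t := \big[Num.max/0]_a \big[Num.max/0]_b `|M a b|.
exists (m%:R * (n%:R * t)) => _ [x /= x_le1 <-].
apply: vnorm_mulmx_le x_le1; first exact: bigmax_ge_id.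
by move=> a b; apply: le_trans (le_bigmax _ _ a); exact: le_bigmax.
Qed.

Lemma vnorm_mulmx_le_specnorm m n (M : 'M[R]_(m, n)) x :
  vnorm x <= 1 -> vnorm (M *m x) <= specnorm M.
Proof. by move=> x_le1; apply: ub_le_sup (specnorm_set_ubound M) _ _; exists x. Qed.

Lemma specnorm_le m n (M : 'M[R]_(m, n)) B :
  (forall x, vnorm x <= 1 -> vnorm (M *m x) <= B) -> specnorm M <= B.
Proof.
move=> MB; apply: ge_sup => [|_ [x /= x_le1 <-]]; last exact: MB.
by exists (vnorm (M *m 0)), 0 => //=; rewrite vnorm0.
Qed.

Lemma specnorm_ge0 m n (M : 'M[R]_(m, n)) : 0 <= specnorm M.
Proof.
have := @vnorm_mulmx_le_specnorm _ _ M 0; rewrite mulmx0 !vnorm0; exact.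
Qed.

Lemma specnormZ_le m n (M : 'M[R]_(m, n)) c :
  0 <= c -> specnorm (c *: M) <= c * specnorm M.
Proof.
move=> c_ge0; apply: specnorm_le => x x_le1.
by rewrite -scalemxAl vnormZ ger0_norm ?ler_wpM2l ?vnorm_mulmx_le_specnorm.
Qed.

Lemma normr_entry_le_specnorm m n (M : 'M[R]_(m, n)) a b :
  `|M a b| <= specnorm M.
Proof.
have delta_le1 : vnorm (delta_mx b 0 : 'cV[R]_n) <= 1.
  rewrite /vnorm (bigD1 b) //= big1 => [|i /negPf ib].
    by rewrite mxE !eqxx expr1n addr0 sqrtr1.
  by rewrite mxE ib expr0n.
apply: le_trans (vnorm_mulmx_le_specnorm M delta_le1).
by rewrite -colE; have := normr_le_vnorm (col b M) a; rewrite mxE.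
Qed.

End SpectralNorm.

Section TensorScaling.
Variable R : realType.

Lemma tensorZE n1 n2 n3 (A : tensor R n1 n2 n3) c k i j :
  (c *: A) k i j = c * A k i j.
Proof. by rewrite ffunE mxE. Qed.

Lemma bcircZ n1 n2 n3 (A : tensor R n1 n2 n3) c : bcirc (c *: A) = c *: bcirc A.
Proof. by apply/matrixP => a b; rewrite !mxE tensorZE. Qed.

Lemma unfoldZ n1 n2 n3 (A : tensor R n1 n2 n3) c : unfold (c *: A) = c *: unfold A.
Proof. by apply/matrixP => a b; rewrite !mxE tensorZE. Qed.

Lemma foldZ n1 n2 n3 (M : 'M[R]_(\sum_(k < n3) n1, n2)) c :
  fold (c *: M) = c *: fold M.
Proof. by apply/ffunP => k; apply/matrixP => a b; rewrite !ffunE !mxE. Qed.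

Lemma ttrZ n1 n2 n3 (A : tensor R n1 n2 n3) c : ttr (c *: A) = c *: ttr A.
Proof. by apply/ffunP => k; rewrite !ffunE linearZ. Qed.

Lemma tprodZl n1 n2 n3 n4 (A : tensor R n1 n2 n3) (B : tensor R n2 n4 n3) c :
  tprod (c *: A) B = c *: tprod A B.
Proof. by rewrite /tprod bcircZ -scalemxAl foldZ. Qed.

Lemma tprodZr n1 n2 n3 n4 (A : tensor R n1 n2 n3) (B : tensor R n2 n4 n3) c :
  tprod A (c *: B) = c *: tprod A B.
Proof. by rewrite /tprod unfoldZ -scalemxAr foldZ. Qed.

Lemma TspaceZ n1 n2 n3 r (U : tensor R n1 r n3) (V : tensor R n2 r n3) N c :
  Tspace U V N -> Tspace U V (c *: N).
Proof.
case=> Y [W ->]; exists (c *: Y), (c *: W).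
by rewrite ttrZ tprodZr tprodZl scalerDr.
Qed.

Lemma Tspace0 n1 n2 n3 r (U : tensor R n1 r n3) (V : tensor R n2 r n3) :
  Tspace U V 0.
Proof.
rewrite -(scale0r (tprod U (ttr 0) + tprod 0 (ttr V))).
by apply: TspaceZ; exists 0, 0.
Qed.

Lemma OmegaZ n1 n2 n3 (E N : tensor R n1 n2 n3) c :
  Omega E N -> Omega E (c *: N).
Proof. by move=> EN k i j /EN Nkij0; rewrite tensorZE Nkij0 mulr0. Qed.

Lemma tzeroE n1 n2 n3 : tzero R n1 n2 n3 = 0.
Proof. by apply/ffunP => k; rewrite !ffunE. Qed.

End TensorScaling.

Section TensorNorms.
Variables (R : realType) (n1 n2 n3 : nat).
Implicit Types (N : tensor R n1 n2 n3).

Lemma tnorm_inf_ge0 N : 0 <= tnorm_inf N.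
Proof. exact: bigmax_ge_id. Qed.

Lemma normr_le_tnorm_inf N k i j : `|N k i j| <= tnorm_inf N.
Proof.
apply: le_trans (le_bigmax _ _ k); apply: le_trans (le_bigmax _ _ i).
exact: (le_bigmax _ (fun j => `|N k i j|)).
Qed.

Lemma tnorm_inf_le N B :
  0 <= B -> (forall k i j, `|N k i j| <= B) -> tnorm_inf N <= B.
Proof. by move=> B_ge0 NB; do 3!(apply: bigmax_le => // ? _). Qed.

Lemma tnorm_inf_gt0 N : N != 0 -> 0 < tnorm_inf N.
Proof.
rewrite lt_def tnorm_inf_ge0 andbT; apply: contraNneq => N_eq0.
apply/eqP/ffunP => k; apply/matrixP => i j; apply/eqP.
by rewrite !ffunE mxE -normr_le0 -N_eq0 normr_le_tnorm_inf.
Qed.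

Lemma bcirc_entry_slice N a b : exists k i j, bcirc N a b = N k i j.
Proof. by rewrite /bcirc /mxblock mxE; do 3 eexists. Qed.

Lemma slice_entry_bcirc N k i j : exists a b, bcirc N a b = N k i j.
Proof.
(* Block (k, 0) of bcirc N is the slice N k. *)
have lt0k : (0 < n3)%N by apply: leq_ltn_trans (ltn_ord k).
have cidx_k0 : cidx k (Ordinal lt0k) = k.
  by apply/val_inj; rewrite /= subn0 modnDr modn_small.
have := congr1 (fun M : 'M[R]_(n1, n2) => M i j)
                (mxblockK (fun k l => N (cidx k l)) k (Ordinal lt0k)).
by rewrite /submxblock mxE cidx_k0 => <-; do 2 eexists.
Qed.

Lemma tnorm_inf_le_tnorm N : tnorm_inf N <= tnorm N.
Proof.
apply: tnorm_inf_le => [|k i j]; first exact: specnorm_ge0.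
have [a [b <-]] := slice_entry_bcirc N k i j.
exact: normr_entry_le_specnorm.
Qed.

Lemma tnorm_le_tnorm_inf N :
  tnorm N <= (\sum_(k < n3) n1)%:R * ((\sum_(k < n3) n2)%:R * tnorm_inf N).
Proof.
apply: specnorm_le => x x_le1; apply: (vnorm_mulmx_le _ _ x_le1) => [|a b].
  exact: tnorm_inf_ge0.
have [k [i [j ->]]] := bcirc_entry_slice N a b.
exact: normr_le_tnorm_inf.
Qed.

Lemma tnormZ_le c N : 0 < c -> tnorm (c *: N) <= c * tnorm N.
Proof.
by move=> c_gt0; rewrite /tnorm bcircZ specnormZ_le ?(ltW c_gt0).
Qed.

Lemma tnorm_infZ_le c N : 0 < c -> tnorm_inf (c *: N) <= c * tnorm_inf N.
Proof.
move=> c_gt0; apply: tnorm_inf_le => [|k i j].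
  exact: mulr_ge0 (ltW c_gt0) (tnorm_inf_ge0 N).
by rewrite tensorZE normrM gtr0_norm // ler_pM2l // normr_le_tnorm_inf.
Qed.

Lemma tnormZ c N : 0 < c -> tnorm (c *: N) = c * tnorm N.
Proof. exact/posZ_eq_of_le/tnormZ_le. Qed.

Lemma tnorm_infZ c N : 0 < c -> tnorm_inf (c *: N) = c * tnorm_inf N.
Proof. exact/posZ_eq_of_le/tnorm_infZ_le. Qed.

Lemma tnorm_gt0 N : N != 0 -> 0 < tnorm N.
Proof.
by move=> N_neq0; apply: lt_le_trans (tnorm_inf_le_tnorm N); exact: tnorm_inf_gt0.
Qed.

End TensorNorms.

Section Coherence.
Variables (R : realType) (n1 n2 n3 : nat).
Implicit Types (N E : tensor R n1 n2 n3).

Lemma xi_set_ubound r (U : tensor R n1 r n3) (V : tensor R n2 r n3) :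
  has_ubound [set tnorm_inf N | N in Tspace U V `&` [set N | tnorm N <= 1]].
Proof.
by exists 1 => _ [N [_ /= N_le1] <-]; exact: le_trans (tnorm_inf_le_tnorm N) N_le1.
Qed.

Lemma tnorm_ratio_le_xi r (U : tensor R n1 r n3) (V : tensor R n2 r n3) N :
  Tspace U V N -> N != 0 -> tnorm_inf N / tnorm N <= xi U V.
Proof.
move=> TN N_neq0; have tN_gt0 := tnorm_gt0 N_neq0.
apply: ub_le_sup (xi_set_ubound U V) _ _; exists ((tnorm N)^-1 *: N).
  by split; [exact: TspaceZ | rewrite /= tnormZ ?invr_gt0 // mulVf ?gt_eqF].
by rewrite tnorm_infZ ?invr_gt0 // mulrC.
Qed.

Lemma mu_set_ubound E :
  has_ubound [set tnorm N | N in Omega E `&` [set N | tnorm_inf N <= 1]].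
Proof.
exists ((\sum_(k < n3) n1)%:R * ((\sum_(k < n3) n2)%:R * 1)).
move=> _ [N [_ /= N_le1] <-]; apply: le_trans (tnorm_le_tnorm_inf N) _.
by rewrite ler_wpM2l // ler_wpM2l.
Qed.

Lemma tnorm_ratio_le_mu E N : Omega E N -> N != 0 -> tnorm N / tnorm_inf N <= mu E.
Proof.
move=> EN N_neq0; have tN_gt0 := tnorm_inf_gt0 N_neq0.
apply: ub_le_sup (mu_set_ubound E) _ _; exists ((tnorm_inf N)^-1 *: N).
  by split; [exact: OmegaZ | rewrite /= tnorm_infZ ?invr_gt0 // mulVf ?gt_eqF].
by rewrite tnormZ ?invr_gt0 // mulrC.
Qed.

End Coherence.

Theorem lemma2 (R : realType) (n1 n2 n3 : nat) (L0 E0 : tensor R n1 n2 n3)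
  (r : nat) (U : tensor R n1 r n3) (S : tensor R r r n3) (V : tensor R n2 r n3) :
  skinny_tSVD L0 U S V ->
  xi U V * mu E0 < 1 ->
  Tspace U V `&` Omega E0 = [set tzero R n1 n2 n3].
Proof.
(* T(L0) is determined by U and V alone. *)
move=> _ xi_mu_lt1; rewrite tzeroE predeqE => N; split => [[TN EN] | ->]; last first.
  by split; [exact: Tspace0 | move=> k i j _; rewrite ffunE mxE].
apply/eqP; apply: contraTT xi_mu_lt1 => N_neq0; rewrite -leNgt.
have inf_gt0 := tnorm_inf_gt0 N_neq0; have spec_gt0 := tnorm_gt0 N_neq0.
apply: le_trans (ler_pM _ _ (tnorm_ratio_le_xi TN N_neq0) (tnorm_ratio_le_mu EN N_neq0)).
- by rewrite mulrA divfK ?gt_eqF // mulfV ?gt_eqF.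
- exact/ltW/divr_gt0.
- exact/ltW/divr_gt0.
Qed.
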